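(* Let $\mathsf{\Sigma}\in\mathbb{R}^{N\times N_S}$ and $\mathsf{\Lambda}\in\mathbb{R}^{N\times N_L}$ be the Star-to-RWG and Loop-to-RWG matrices of a triangular surface mesh (so that $\mathsf{\Sigma}^{\mathrm T}\mathsf{\Lambda}=\mathsf{0}$), with $\mathsf{P}^\Sigma=\mathsf{\Sigma}(\mathsf{\Sigma}^{\mathrm T}\mathsf{\Sigma})^+\mathsf{\Sigma}^{\mathrm T}$, $\mathbb{P}^\Lambda=\mathsf{\Lambda}(\mathsf{\Lambda}^{\mathrm T}\mathsf{\Lambda})^+\mathsf{\Lambda}^{\mathrm T}$, and quasi-Helmholtz Laplacian filters $\mathsf{P}_n^\Sigma=\mathsf{\Sigma}((\mathsf{\Sigma}^{\mathrm T}\mathsf{\Sigma})_n)^+\mathsf{\Sigma}^{\mathrm T}$, $\mathbb{P}_n^\Lambda=\mathsf{\Lambda}((\mathsf{\Lambda}^{\mathrm T}\mathsf{\Lambda})_n)^+\mathsf{\Lambda}^{\mathrm T}$, $\mathsf{P}_n^{\Lambda H}=\mathbb{P}_n^\Lambda+\mathsf{I}-\mathsf{P}^\Sigma-\mathbb{P}^\Lambda$, $\mathbb{P}_n^{\Sigma H}=\mathsf{P}_n^\Sigma+\mathsf{I}-\mathbb{P}^\Lambda-\mathsf{P}^\Sigma$. Then for all integers $1\le m<n<p<q\le N_S$, $$(\mathsf{P}_m^\Sigma-\mathsf{P}_n^\Sigma)(\mathsf{P}_p^\Sigma-\mathsf{P}_q^\Sigma)=\mathsf{0},\qquad (\mathbb{P}_m^{\Sigma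 H}-\mathbb{P}_n^{\Sigma H})(\mathbb{P}_p^{\Sigma H}-\mathbb{P}_q^{\Sigma H})=\mathsf{0},$$ and for all integers $1\le m<n<p<q\le N_L$, $$(\mathbb{P}_m^\Lambda-\mathbb{P}_n^\Lambda)(\mathbb{P}_p^\Lambda-\mathbb{P}_q^\Lambda)=\mathsf{0},\qquad (\mathsf{P}_m^{\Lambda H}-\mathsf{P}_n^{\Lambda H})(\mathsf{P}_p^{\Lambda H}-\mathsf{P}_q^{\Lambda H})=\mathsf{0}.$$
   Context: Consider a closed triangulated surface with $N$ edges, $N_S$ triangles and $N_L$ vertices; $\mathsf{I}$ is the $N\times N$ identity. Each edge $m$ is shared by two triangles $c_m^+$, $c_m^-$. $[\mathsf{\Sigma}]_{mn}=1$ if cell $n$ is $c_m^+$, $-1$ if cell $n$ is $c_m^-$, $0$ otherwise. $[\mathsf{\Lambda}]_{mn}=\pm1$ when vertex $n$ is an endpoint of edge $m$ (opposite signs for the two endpoints, fixed by the orientation convention of the RWG functions), $0$ otherwise; with this convention $\mathsf{\Sigma}^{\mathrm T}\mathsf{\Lambda}=\mathsf{0}$. $^+$ denotes the Moore–Penrose pseudo-inverse. For $\mathsf{X}\in\{\mathsf{\Sigma},\mathsf{\Lambda}\}$ with $N_x$ columns, fix an SVD $\mathsf{X}=\mathsf{U}_X\mathsf{S}_X\mathsf{V}_X^{\mathrm T}$ with $\mathsf{V}_X$ orthogonal $N_x\times N_x$ and singular values $\sigma_{X,1}\ge\dots\ge\sigma_{X,N_x}\ge0$, so $\mathsf{X}^{\mathrm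 T}\mathsf{X}=\mathsf{V}_X\mathrm{diag}(\sigma_{X,i}^2)\mathsf{V}_X^{\mathrm T}$. For $1\le n\le N_x$, $\mathsf{L}_{X,n}$ is diagonal with $[\mathsf{L}_{X,n}]_{ii}=\sigma_{X,i}$ if $i>N_x-n$ and $0$ otherwise, and $(\mathsf{X}^{\mathrm T}\mathsf{X})_n=\mathsf{V}_X\mathsf{L}_{X,n}^2\mathsf{V}_X^{\mathrm T}$. *)

From HB Require Import structures.
From mathcomp Require Import all_boot all_order all_algebra.
From mathcomp Require Import reals.
From Stdlib Require Import ClassicalEpsilon.
Set Implicit Arguments. Unset Strict Implicit. Unset Printing Implicit Defensive.
Import Order.TTheory GRing.Theory Num.Theory.
Local Open Scope ring_scope.

Section Defs.
Variable R : realType.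

Definition is_MP_pinv (m n : nat) (A : 'M[R]_(m, n)) (B : 'M[R]_(n, m)) : Prop :=
  [/\ A *m B *m A = A, B *m A *m B = B,
      (A *m B)^T = A *m B & (B *m A)^T = B *m A].

(* The Moore--Penrose pseudo-inverse A^+ (it exists and is unique, so the
   choice below picks exactly it). *)
Definition mp_pinv (m n : nat) (A : 'M[R]_(m, n)) : 'M[R]_(n, m) :=
  epsilon (inhabits 0) (is_MP_pinv A).

Definition star_mx (N NS : nat) (cp cm : 'I_N -> 'I_NS) : 'M[R]_(N, NS) :=
  \matrix_(e < N, c < NS)
     (if c == cp e then 1 else if c == cm e then -1 else 0).

(* Loop-to-RWG matrix: edge e has endpoints va e (sign +1) and vb e (sign -1),
   the labelling of the endpoints encoding the RWG orientation convention. *)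
Definition loop_mx (N NL : nat) (va vb : 'I_N -> 'I_NL) : 'M[R]_(N, NL) :=
  \matrix_(e < N, v < NL)
     (if v == va e then 1 else if v == vb e then -1 else 0).

Definition svd_data (N Nx : nat) (X : 'M[R]_(N, Nx)) (V : 'M[R]_Nx)
    (sigma : 'I_Nx -> R) : Prop :=
  [/\ V^T *m V = 1%:M,
      (forall i, 0 <= sigma i),
      (forall i j : 'I_Nx, (i <= j)%N -> sigma j <= sigma i) &
      X^T *m X = V *m diag_mx (\row_i (sigma i ^+ 2)) *m V^T].

(* L_{X,n}: diagonal, [L]_{ii} = sigma_i if i > Nx - n (1-indexed),
   i.e. Nx - n <= i for 0-indexed i. *)
Definition Lmx (Nx : nat) (sigma : 'I_Nx -> R) (n : nat) : 'M[R]_Nx :=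
  diag_mx (\row_(i < Nx) (if (Nx - n <= i)%N then sigma i else 0)).

Definition gram_trunc (Nx : nat) (V : 'M[R]_Nx) (sigma : 'I_Nx -> R) (n : nat)
  : 'M[R]_Nx := V *m (Lmx sigma n *m Lmx sigma n) *m V^T.

Definition proj_full (N Nx : nat) (X : 'M[R]_(N, Nx)) : 'M[R]_N :=
  X *m mp_pinv (X^T *m X) *m X^T.

Definition proj_filt (N Nx : nat) (X : 'M[R]_(N, Nx)) (V : 'M[R]_Nx)
    (sigma : 'I_Nx -> R) (n : nat) : 'M[R]_N :=
  X *m mp_pinv (gram_trunc V sigma n) *m X^T.

End Defs.

From HB Require Import structures.
From mathcomp Require Import all_boot all_order all_algebra.
From mathcomp Require Import reals zify.
From Stdlib Require Import ClassicalEpsilon.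
Set Implicit Arguments. Unset Strict Implicit. Unset Printing Implicit Defensive.
Import Order.TTheory GRing.Theory Num.Theory.
Local Open Scope ring_scope.

(* Put W := X V.  The SVD data give W^T W = diag(sigma_i^2), and conjugating
   the pseudo-inverse of L_n^2 by the orthogonal V gives P_n^X = W diag(w_n) W^T,
   where w_n inverts sigma_i^2 on the n last indices and vanishes elsewhere.
   So for m <= n, P_m - P_n = W D W^T with D supported on the index band
   [N_x - n, N_x - m); for n <= p the product of two such differences is
   W D diag(sigma^2) D' W^T with disjointly supported D, D', hence 0.  The
   Helmholtz-corrected filters differ from P_n^X by a matrix independent of n,
   so they have the same differences. *)

Section PseudoInverse.
Variable R : realType.

Lemma is_MP_pinv_unique m n (A : 'M[R]_(m, n)) B C :
  is_MP_pinv A B -> is_MP_pinv A C -> B = C.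
Proof.
case=> ABA BAB ABsym BAsym [ACA CAC ACsym CAsym].
have trA_C : A^T = A^T *m A *m C by rewrite -{1}ACA trmx_mul ACsym mulmxA.
have trA_B : A^T = B *m A *m A^T.
  by rewrite -{1}ABA -[A *m B *m A]mulmxA trmx_mul BAsym.
have B_BAC : B = B *m A *m C.
  transitivity (B *m (A *m B)^T); first by rewrite ABsym mulmxA BAB.
  rewrite trmx_mul trA_C !mulmxA.
  by rewrite -[B *m B^T *m A^T]mulmxA -trmx_mul ABsym mulmxA BAB.
have C_BAC : C = B *m A *m C.
  transitivity ((C *m A)^T *m C); first by rewrite CAsym CAC.
  by rewrite trmx_mul trA_B -!mulmxA [A^T *m (C^T *m C)]mulmxA -trmx_mul CAsym CAC.
by rewrite B_BAC -C_BAC.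
Qed.

Lemma mp_pinvE m n (A : 'M[R]_(m, n)) B : is_MP_pinv A B -> mp_pinv A = B.
Proof.
move=> AB; symmetry; apply: (is_MP_pinv_unique AB).
exact: (epsilon_spec _ _ (ex_intro _ B AB)).
Qed.

(* Entrywise inversion works because 0^-1 = 0 in a field. *)
Lemma is_MP_pinv_diag n (d : 'rV[R]_n) :
  is_MP_pinv (diag_mx d) (diag_mx (\row_j (d 0 j)^-1)).
Proof.
have dd'd (x : R) : x * x^-1 * x = x.
  by have [->|x0] := eqVneq x 0; rewrite ?mulr0 // mulfV // mul1r.
split; rewrite !mulmx_diag ?tr_diag_mx //; congr diag_mx; apply/rowP => j;
  rewrite !mxE //.
by rewrite -{2}[(d 0 j)]invrK dd'd.
Qed.

Lemma is_MP_pinv_isometry_conj m n k l (U : 'M[R]_(m, k)) (W : 'M[R]_(n, l))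
    (A : 'M[R]_(k, l)) (B : 'M[R]_(l, k)) :
  U^T *m U = 1%:M -> W^T *m W = 1%:M ->
  is_MP_pinv A B -> is_MP_pinv (U *m A *m W^T) (W *m B *m U^T).
Proof.
move=> UU WW [ABA BAB ABsym BAsym].
have cancelW p (Y : 'M[R]_(p, l)) : Y *m W^T *m W = Y by rewrite -mulmxA WW mulmx1.
have cancelU p (Y : 'M[R]_(p, k)) : Y *m U^T *m U = Y by rewrite -mulmxA UU mulmx1.
have trconj p q (M : 'M[R]_(p, q)) (Y : 'M[R]_(_, p)) (Z : 'M[R]_(_, q)) :
  (Y *m M *m Z^T)^T = Z *m M^T *m Y^T by rewrite !trmx_mul trmxK mulmxA.
split; rewrite !mulmxA ?cancelW ?cancelU.
- by rewrite -[U *m A *m B]mulmxA -[U *m (A *m B) *m A]mulmxA ABA.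
- by rewrite -[W *m B *m A]mulmxA -[W *m (B *m A) *m B]mulmxA BAB.
- by rewrite -[U *m A *m B]mulmxA trconj ABsym.
- by rewrite -[W *m B *m A]mulmxA trconj BAsym.
Qed.

Lemma mp_pinv_orth_diag k (V : 'M[R]_k) (d : 'rV[R]_k) :
  V^T *m V = 1%:M ->
  mp_pinv (V *m diag_mx d *m V^T) = V *m diag_mx (\row_j (d 0 j)^-1) *m V^T.
Proof.
by move=> VV; apply/mp_pinvE/is_MP_pinv_isometry_conj/is_MP_pinv_diag.
Qed.

End PseudoInverse.

Section SpectralFilters.
Variables (R : realType) (N k : nat) (X : 'M[R]_(N, k)) (V : 'M[R]_k).
Variable sigma : 'I_k -> R.
Hypothesis VV : V^T *m V = 1%:M.
Hypothesis gramX : X^T *m X = V *m diag_mx (\row_i (sigma i ^+ 2)) *m V^T.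

Definition filt_weight (n : nat) : 'rV[R]_k :=
  \row_i (if (k - n <= i)%N then (sigma i ^+ 2)^-1 else 0).

Lemma proj_filtE n :
  proj_filt X V sigma n = X *m V *m diag_mx (filt_weight n) *m (X *m V)^T.
Proof.
rewrite /proj_filt /gram_trunc /Lmx mulmx_diag mp_pinv_orth_diag //.
rewrite trmx_mul !mulmxA; congr (_ *m diag_mx _ *m _ *m _).
apply/rowP => j; rewrite !mxE; case: ifP => _.
  by rewrite expr2.
by rewrite mulr0 invr0.
Qed.

Lemma gram_rotated :
  (X *m V)^T *m (X *m V) = diag_mx (\row_i (sigma i ^+ 2)).
Proof.
rewrite trmx_mul mulmxA -[V^T *m X^T *m X]mulmxA gramX !mulmxA VV mul1mx.
by rewrite -mulmxA VV mulmx1.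
Qed.

Lemma filt_weight_bands_disjoint m n p q (i : 'I_k) :
  (m <= n)%N -> (n <= p)%N -> (p <= q)%N ->
  (filt_weight m - filt_weight n) 0 i * (filt_weight p - filt_weight q) 0 i = 0.
Proof.
move=> mn np pq; rewrite !mxE.
have [ni|ni] := leqP (k - n) i.
  have pi : (k - p <= i)%N by lia.
  have qi : (k - q <= i)%N by lia.
  by rewrite pi qi subrr mulr0.
have mi : (k - m <= i)%N = false by apply/negbTE; rewrite -ltnNge; lia.
by rewrite mi subrr mul0r.
Qed.

Lemma proj_filt_bands_orth m n p q :
  (m <= n)%N -> (n <= p)%N -> (p <= q)%N ->
  (proj_filt X V sigma m - proj_filt X V sigma n) *m
  (proj_filt X V sigma p - proj_filt X V sigma q) = 0.
Proof.
move=> mn np pq; rewrite !proj_filtE -!mulmxBl -!mulmxBr -!linearB /=.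
set W := X *m V; set D := diag_mx (filt_weight m - _); set D' := diag_mx _.
transitivity (W *m (D *m (W^T *m W) *m D') *m W^T); first by rewrite !mulmxA.
rewrite gram_rotated !mulmx_diag (_ : \row_j _ = 0) ?linear0 ?mulmx0 ?mul0mx //.
apply/rowP => j; rewrite mxE [X in X * _]mxE mulrAC.
by rewrite (filt_weight_bands_disjoint j mn np pq) mul0r mxE.
Qed.

End SpectralFilters.

Theorem mainTheorem6 (R : realType) (N NS NL : nat)
    (cp cm : 'I_N -> 'I_NS) (va vb : 'I_N -> 'I_NL)
    (Hc : forall e, cp e != cm e) (Hv : forall e, va e != vb e)
    (HSL : (star_mx R cp cm)^T *m loop_mx R va vb = 0)
    (VS : 'M[R]_NS) (sS : 'I_NS -> R) (VL : 'M[R]_NL) (sL : 'I_NL -> R)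
    (HsvdS : svd_data (star_mx R cp cm) VS sS)
    (HsvdL : svd_data (loop_mx R va vb) VL sL) :
  let Sig := star_mx R cp cm in
  let Lam := loop_mx R va vb in
  let PS := proj_full Sig in
  let PL := proj_full Lam in
  let PSn := fun n => proj_filt Sig VS sS n in
  let PLn := fun n => proj_filt Lam VL sL n in
  let PLHn := fun n => PLn n + 1%:M - PS - PL in
  let PSHn := fun n => PSn n + 1%:M - PL - PS in
  (forall m n p q : nat, [&& (1 <= m)%N, (m < n)%N, (n < p)%N, (p < q)%N & (q <= NS)%N] ->
     (PSn m - PSn n) *m (PSn p - PSn q) = 0 /\
     (PSHn m - PSHn n) *m (PSHn p - PSHn q) = 0) /\
  (forall m n p q : nat, [&& (1 <= m)%N, (m < n)%N, (n < p)%N, (p < q)%N & (q <= NL)%N] ->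
     (PLn m - PLn n) *m (PLn p - PLn q) = 0 /\
     (PLHn m - PLHn n) *m (PLHn p - PLHn q) = 0).
Proof.
move=> Sig Lam PS PL PSn PLn PLHn PSHn.
have [VVS _ _ gramS] := HsvdS; have [VVL _ _ gramL] := HsvdL.
have orthS m n p q : (m <= n)%N -> (n <= p)%N -> (p <= q)%N ->
    (PSn m - PSn n) *m (PSn p - PSn q) = 0.
  exact: (proj_filt_bands_orth VVS gramS).
have orthL m n p q : (m <= n)%N -> (n <= p)%N -> (p <= q)%N ->
    (PLn m - PLn n) *m (PLn p - PLn q) = 0.
  exact: (proj_filt_bands_orth VVL gramL).
have shift (P : nat -> 'M[R]_N) (C D : 'M[R]_N) a b :
    (P a + 1%:M - C - D) - (P b + 1%:M - C - D) = P a - P b.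
  have shiftE x : P x + 1%:M - C - D = P x + (1%:M - C - D) by rewrite !addrA.
  by rewrite !shiftE [P b + _]addrC addrKA.
rewrite /PSHn /PLHn; clearbody PSn PLn PS PL.
split=> m n p q /and5P [_ mn np pq _]; rewrite !shift.
  by split; apply: orthS => //; apply: ltnW.
by split; apply: orthL => //; apply: ltnW.
Qed.
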